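(* Let $(\xi_j)_{j\ge 0}$ be independent, identically distributed random variables taking values in $\{-1,0,1\}$ with $\max_{x\in\{-1,0,1\}} \mathbb{P}(\xi_0 = x) < \frac{1}{\sqrt{3}}$, and for $n\ge 1$ let $P(z):=\sum_{j=0}^n \xi_j z^j$. There exist constants $C,c>0$ (depending only on the distribution of $\xi_0$) such that for every $n\ge1$ and every $1\le d\le n$, \[\mathbb{P}(P\text{ has a double root } \alpha \text{ with } \deg(\alpha)\ge d)\le C\exp(-cd).\]
   Context: For an algebraic integer $\alpha$, $\deg(\alpha)$ denotes its algebraic degree, i.e., the degree of its minimal polynomial (the monic polynomial in $\mathbb{Z}[x]$ of least degree having $\alpha$ as a root). The event refers to $P$ having a double root (root of multiplicity at least $2$) $\alpha$ which is an algebraic integer of degree at least $d$. *)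

From HB Require Import structures.
From mathcomp Require Import all_boot all_order all_algebra all_field.
From mathcomp Require Import all_classical all_reals all_analysis.
Set Implicit Arguments. Unset Strict Implicit. Unset Printing Implicit Defensive.
Import Order.TTheory GRing.Theory Num.Theory.
Local Open Scope ring_scope.

(* The three values {-1,0,1} are encoded by 'I_3 via i |-> i - 1. *)
Definition coefval (i : 'I_3) : int := (Posz (nat_of_ord i) - 1)%R.

Definition randpoly (n : nat) (v : {ffun 'I_n.+1 -> 'I_3}) : {poly algC} :=
  \poly_(j < n.+1) ((coefval (v (inord j)))%:~R).

Definition algdeg (a : algC) : nat := (size (minCpoly a)).-1.

Definition double_root (p : {poly algC}) (a : algC) : Prop :=
  (('X - a%:P) ^+ 2 %| p)%R.

Definition event (n d : nat) (v : {ffun 'I_n.+1 -> 'I_3}) : Prop :=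
  exists a : algC, [/\ a \in Aint, double_root (@randpoly n v) a & (d <= algdeg a)%N].

(* probability, under the i.i.d. law with one-point masses p, of the event *)
Definition prob_event (R : realType) (p : 'I_3 -> R) (n d : nat) : R :=
  \sum_(v : {ffun 'I_n.+1 -> 'I_3} | `[< @event n d v >]) \prod_(j < n.+1) p (v j).

(* If an algebraic integer a is a double root of P, its minimal polynomial m is
   monic with integer coefficients and, being separable, satisfies m^2 | P in Z[X].
   Reducing modulo 3 (which keeps the coefficient values -1, 0, 1 apart), either
   P = 0 mod 3 or h^2 | P mod 3 for a monic h over F_3 of degree j with d <= j and
   2j <= n.  For a fixed nonzero g over F_3, the event g | P mod 3 determines the
   lowest deg g coefficients of P from the others, so it has probability at most
   q^(deg g), where q is the largest atom of the law.  Summing over the 3^j monic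
   h of degree j gives (3q^2)^j, and 3q^2 < 1 makes the sum over j >= d a
   geometric tail. *)

From HB Require Import structures.
From mathcomp Require Import all_boot all_order all_algebra all_field.
From mathcomp Require Import all_classical all_reals all_analysis.
From mathcomp Require Import ring.
Set Implicit Arguments. Unset Strict Implicit. Unset Printing Implicit Defensive.
Import Order.TTheory GRing.Theory Num.Theory.
Local Open Scope ring_scope.

Lemma monic_dvdp_map (R : idomainType) (F : fieldType) (f : {rmorphism R -> F})
    (g p : {poly R}) :
  injective f -> g \is monic -> map_poly f g %| map_poly f p ->
  exists q, p = q * g.
Proof.
move=> inj_f mon_g dvd_gp; exists (p %/ g).
have Dp := Pdiv.IdomainMonic.divp_eq mon_g p.
suff r0 : p %% g = 0 by rewrite {1}Dp r0 addr0.
have szf := size_map_inj_poly inj_f (rmorph0 f).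
apply/eqP; rewrite -size_poly_eq0 -szf size_poly_eq0; apply: contraTT dvd_gp => nz_r.
rewrite {1}Dp rmorphD rmorphM /= dvdp_addr ?dvdp_mull //.
by apply/negP => /(dvdp_leq nz_r); rewrite !szf leqNgt ltn_modpN0 // monic_neq0.
Qed.

Lemma sqr_XsubC_dvdp_root (F : fieldType) (p : {poly F}) (a : F) :
  ('X - a%:P) ^+ 2 %| p -> root p a /\ root p^`() a.
Proof.
case/dvdpP=> q ->; rewrite /root derivM expr2 !derivM derivXsubC !hornerE.
by rewrite /= !(subrr, mulr0, mul0r, addr0, add0r).
Qed.

Lemma size_deriv_num (R : numDomainType) (p : {poly R}) :
  size p^`() = (size p).-1.
Proof.
have [p_gt1 | p_le1] := ltnP 1 (size p); last first.
  by rewrite /deriv; case: (size p) p_le1 => [|[|]] // _;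
    rewrite poly_def big_ord0 size_poly0.
have nz_p : p != 0 by rewrite -size_poly_eq0 -lt0n (ltnW p_gt1).
rewrite /deriv size_poly_eq // prednK -?subn1 ?subn_gt0 //.
by rewrite mulrn_eq0 negb_or -lt0n subn_gt0 p_gt1 subn1 -lead_coefE lead_coef_eq0.
Qed.

Lemma root_deriv_minCpoly (a : algC) : ~~ root (minCpoly a)^`() a.
Proof.
have [m [Dm mon_m] m_dvd] := minCpolyP a.
rewrite Dm deriv_map m_dvd.
have m_gt1 : (1 < size m)%N.
  by have := size_minCpoly a; rewrite Dm size_map_inj_poly ?rmorph0 //; apply: fmorph_inj.
have nz_m' : m^`() != 0 by rewrite -size_poly_eq0 size_deriv_num -subn1 subn_eq0 -ltnNge.
by apply/negP => /(dvdp_leq nz_m'); rewrite leqNgt lt_size_deriv ?monic_neq0.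
Qed.

Lemma minCpoly_sqr_dvdp (a : algC) (m P : {poly rat}) :
  minCpoly a = map_poly ratr m -> ('X - a%:P) ^+ 2 %| map_poly ratr P ->
  m ^+ 2 %| P.
Proof.
move=> Dm /sqr_XsubC_dvdp_root[rootP rootP'].
have m_dvd q : root (map_poly ratr q) a = (m %| q).
  have [m0 [Dm0 _] ->] := minCpolyP a.
  by move: Dm; rewrite Dm0 => /map_poly_inj ->.
have [S DP] : exists S, P = S * m by apply/dvdpP; rewrite -m_dvd.
have m_a : (map_poly ratr m).[a] = 0 by apply/eqP; rewrite -Dm; apply: root_minCpoly.
have m'_a : (map_poly ratr m^`()).[a] != 0.
  by have := root_deriv_minCpoly a; rewrite Dm deriv_map.
have nz_m : m != 0.
  by rewrite -(map_poly_eq0 (ratr : {rmorphism rat -> algC})) -Dm minCpoly_eq0.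
rewrite DP expr2 dvdp_mul2r // -m_dvd.
move: rootP'; rewrite DP rmorphM derivM /root !deriv_map !hornerE /= m_a.
by rewrite mulr0 add0r mulf_eq0 (negPf m'_a) orbF.
Qed.

Definition coefpoly (R : nzRingType) {n : nat} (v : {ffun 'I_n.+1 -> 'I_3}) : {poly R} :=
  \poly_(j < n.+1) (coefval (v (inord j)))%:~R.

Lemma map_coefpoly (R S : nzRingType) (f : {rmorphism R -> S}) n
    (v : {ffun 'I_n.+1 -> 'I_3}) :
  map_poly f (coefpoly R v) = coefpoly S v.
Proof.
apply/polyP => i; rewrite coef_map !coef_poly; case: ifP => _;
  [exact: rmorph_int | exact: rmorph0].
Qed.

Lemma map_poly_ratr_intr (p : {poly int}) :
  map_poly (ratr : rat -> algC) (map_poly intr p) = map_poly intr p.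
Proof. by rewrite -map_poly_comp; apply: eq_map_poly => b /=; rewrite rmorph_int. Qed.

Lemma event_sqr_dvdp n d (v : {ffun 'I_n.+1 -> 'I_3}) : event d v ->
  exists m Q : {poly int},
    [/\ m \is monic, (d <= (size m).-1)%N & coefpoly int v = Q * m ^+ 2].
Proof.
move=> [a [/floorpP[m Dm] dbl le_d]].
have mon_m : m \is monic.
  have := minCpoly_monic a; rewrite Dm !monicE lead_coef_map_inj ?rmorph0 //.
    by rewrite -[1]/(1%:~R) eqr_int.
  exact: intr_inj.
have Dm_rat : minCpoly a = map_poly ratr (map_poly intr m) by rewrite map_poly_ratr_intr.
have dbl_rat : ('X - a%:P) ^+ 2 %| map_poly ratr (map_poly intr (coefpoly int v)).
  by rewrite map_poly_ratr_intr map_coefpoly.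
have := minCpoly_sqr_dvdp Dm_rat dbl_rat; rewrite -rmorphXn.
case/(monic_dvdp_map (@intr_inj rat) (monic_exp 2 mon_m)) => Q DP.
exists m, Q; split => //.
by move: le_d; rewrite /algdeg Dm size_map_inj_poly ?rmorph0 //; apply: intr_inj.
Qed.

Lemma coefval_F3_inj : injective (fun x : 'I_3 => (coefval x)%:~R : 'F_3).
Proof. by do 2![case=> [[|[|[|?]]] ?]] => //= _; apply/val_inj. Qed.

Definition monic_of (R : nzRingType) j (c : {ffun 'I_j -> R}) : {poly R} :=
  'X^j + \sum_(i < j) c i *: 'X^i.

Section MonicOf.
Variables (R : nzRingType) (j : nat) (c : {ffun 'I_j -> R}).

Lemma size_monic_of_tail : (size (\sum_(i < j) c i *: 'X^i)%R <= j)%N.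
Proof.
apply: (big_ind (fun r : {poly R} => size r <= j)%N) => [|r s r_j s_j|i _].
- by rewrite size_poly0.
- by rewrite (leq_trans (size_polyD _ _)) // geq_max r_j.
- by rewrite (leq_trans (size_scale_leq _ _)) // size_polyXn.
Qed.

Lemma size_monic_of : size (monic_of c) = j.+1.
Proof. by rewrite size_polyDl size_polyXn // ltnS size_monic_of_tail. Qed.

Lemma monic_of_monic : monic_of c \is monic.
Proof.
by rewrite monicE lead_coefDl ?lead_coefXn // size_polyXn ltnS size_monic_of_tail.
Qed.

End MonicOf.

Lemma monic_ofP (R : nzRingType) (h : {poly R}) : h \is monic ->
  h = monic_of [ffun i : 'I_(size h).-1 => h`_i].
Proof.
move=> mon_h; rewrite /monic_of -[h in LHS]coefK poly_def.
have -> : size h = (size h).-1.+1 by rewrite prednK // lt0n size_poly_eq0 monic_neq0.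
rewrite big_ord_recr /= -lead_coefE (monicP mon_h) scale1r addrC.
by congr (_ + _); apply: eq_bigr => i _; rewrite ffunE.
Qed.

(* The case [P = 0 mod 3] is recorded as ['X^(n.+1) %| P] so that it is counted
   by the same divisibility bound as the square factors. *)
Lemma event_mod3_cover n d (v : {ffun 'I_n.+1 -> 'I_3}) : event d v ->
  ('X^(n.+1) %| coefpoly 'F_3 v) ||
  [exists j : 'I_n.+1, [&& (d <= j)%N, (j.*2 <= n)%N &
     [exists c : {ffun 'I_j -> 'F_3}, monic_of c ^+ 2 %| coefpoly 'F_3 v]]].
Proof.
case/event_sqr_dvdp=> m [Q [mon_m le_d DP]].
set h := map_poly (intr : int -> 'F_3) m.
have mon_h : h \is monic by apply: monic_map.
have size_h : size h = size m.
  by rewrite size_map_poly_id0 // (monicP mon_m) rmorph1 oner_neq0.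
have h2_dvd : h ^+ 2 %| coefpoly 'F_3 v.
  by rewrite -(map_coefpoly intr) DP rmorphM rmorphXn dvdp_mull.
have [-> | nz_P] := eqVneq (coefpoly 'F_3 v) 0; first by rewrite dvdp0.
have size_h2 : size (h ^+ 2) = ((size h).-1 * 2).+1.
  by rewrite -size_exp prednK // lt0n size_poly_eq0 monic_neq0 ?monic_exp.
have le_h2 : ((size h).-1.*2 <= n)%N.
  by rewrite -muln2 -ltnS -size_h2 (leq_trans (dvdp_leq nz_P h2_dvd)) ?size_poly.
have lt_h : ((size h).-1 < n.+1)%N.
  by rewrite ltnS (leq_trans _ le_h2) // -addnn leq_addr.
apply/orP; right; apply/existsP; exists (Ordinal lt_h); rewrite /= size_h le_d.
rewrite -size_h le_h2; apply/existsP.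
by exists [ffun i : 'I_(size h).-1 => h`_i]; rewrite -monic_ofP.
Qed.

Lemma union_bound (R : numDomainType) (T X : finType) (w : T -> R) (P : pred T)
    (B : pred X) (Q : X -> pred T) :
  (forall v, 0 <= w v) -> (forall v, P v -> exists2 x, B x & Q x v) ->
  \sum_(v | P v) w v <= \sum_(x | B x) \sum_(v | Q x v) w v.
Proof.
move=> w_ge0 cover; rewrite (exchange_big_dep predT) //= [leLHS]big_mkcond.
apply: ler_sum => v _; case: ifP => [/cover[x Bx Qx] | _]; last exact: sumr_ge0.
by rewrite (bigD1 x) /= ?Bx // lerDl sumr_ge0.
Qed.

Lemma sum_prod_le_of_determined (R : numDomainType) (I J : finType) (p : J -> R)
    (q : R) (K : {set I}) (S : {set {ffun I -> J}}) :
  (forall y, 0 <= p y) -> (forall y, p y <= q) -> \sum_y p y = 1 ->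
  {in S &, forall v w : {ffun I -> J}, (forall i, i \notin K -> v i = w i) -> v = w} ->
  \sum_(v in S) \prod_i p (v i) <= q ^+ #|K|.
Proof.
move=> p_ge0 p_le_q p_sum1 S_det.
have [y0 _ | J0] := pickP J; last first.
  by move: p_sum1; rewrite big_pred0 // => /eqP; rewrite eq_sym oner_eq0.
pose F (v : {ffun I -> J}) := \prod_(i | i \notin K) p (v i).
have le_qF : \sum_(v in S) \prod_i p (v i) <= q ^+ #|K| * \sum_(v in S) F v.
  rewrite mulr_sumr; apply: ler_sum => v _.
  rewrite (bigID (mem K)) /= -prodr_const ler_wpM2r ?prodr_ge0 //.
  by apply: ler_prod => i _; rewrite p_ge0 p_le_q.
apply: (le_trans le_qF); rewrite -[leRHS]mulr1 ler_wpM2l ?exprn_ge0 //.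
  exact: le_trans (p_ge0 y0) (p_le_q y0).
(* Freezing the coordinates in [K] is injective on [S] and preserves [F]. *)
pose reset (v : {ffun I -> J}) := [ffun i => if i \in K then y0 else v i].
pose G (w : {ffun I -> J}) := \prod_i (if i \in K then (w i == y0)%:R else p (w i)).
have reset_inj : {in S &, injective reset}.
  move=> v w vS wS /ffunP vw; apply: S_det => // i /negbTE iK.
  by have := vw i; rewrite !ffunE iK.
have GF v : G (reset v) = F v.
  rewrite /G (bigID (mem K)) /= big1 ?mul1r => [|i iK]; last by rewrite iK ffunE iK eqxx.
  by apply: eq_bigr => i /negbTE iK; rewrite iK ffunE iK.
have G_sum1 : \sum_w G w = 1.
  rewrite /G -(bigA_distr_bigA (fun i y => if i \in K then (y == y0)%:R else p y)) /=.
  rewrite big1 // => i _; case: (i \in K) => //.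
  by rewrite (bigD1 y0) //= eqxx big1 ?addr0 // => y /negbTE ->.
under eq_bigr do rewrite -GF; rewrite -big_imset //= -G_sum1.
rewrite [leRHS](bigID (mem (reset @: S))) /= lerDl.
by apply: sumr_ge0 => w _; apply: prodr_ge0 => i _; case: ifP.
Qed.

Lemma card_ord_lt N k : (k <= N)%N -> #|[set i : 'I_N | (i < k)%N]| = k.
Proof.
move=> le_kN; have widen_inj : injective (widen_ord le_kN).
  by move=> i j [] /val_inj.
rewrite -[RHS]card_ord -(card_imset _ widen_inj); apply: eq_card => i.
rewrite !inE; apply/idP/imsetP => [lt_ik | [j _ ->]]; last by rewrite /= ltn_ord.
by exists (Ordinal lt_ik) => //; apply/val_inj.
Qed.

Lemma dvdp_coefpoly_determined n (g : {poly 'F_3}) (v w : {ffun 'I_n.+1 -> 'I_3}) :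
  g != 0 -> g %| coefpoly 'F_3 v -> g %| coefpoly 'F_3 w ->
  (forall i : 'I_n.+1, ((size g).-1 <= i)%N -> v i = w i) -> v = w.
Proof.
move=> nz_g gv gw vw.
set D := coefpoly 'F_3 v - coefpoly 'F_3 w.
have size_D : (size D <= (size g).-1)%N.
  apply/leq_sizeP => i le_i; rewrite coefB !coef_poly.
  by case: ltnP => [lt_i | _]; rewrite ?subrr // vw ?subrr // inordK.
have D0 : D = 0.
  apply/eqP; apply: contraTT size_D => nz_D; rewrite -ltnNge prednK ?lt0n ?size_poly_eq0 //.
  exact: dvdp_leq nz_D (dvdp_sub gv gw).
apply/ffunP => i; apply: coefval_F3_inj; apply/eqP; rewrite -subr_eq0.
by move/polyP/(_ i): D0; rewrite coefB !coef_poly ltn_ord inord_val coef0 => ->.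
Qed.

Definition prob (R : numDomainType) (p : 'I_3 -> R) n (A : pred {ffun 'I_n.+1 -> 'I_3}) :=
  \sum_(v | A v) \prod_(j < n.+1) p (v j).

Section ProbabilityBounds.
Variables (R : realType) (p : 'I_3 -> R) (q : R).
Hypotheses (p_ge0 : forall x, 0 <= p x) (p_sum1 : \sum_x p x = 1)
  (p_le_q : forall x, p x <= q).

Lemma prob_dvdp_le n (g : {poly 'F_3}) : g != 0 -> ((size g).-1 <= n.+1)%N ->
  prob p (fun v : {ffun 'I_n.+1 -> 'I_3} => g %| coefpoly 'F_3 v) <= q ^+ (size g).-1.
Proof.
move=> nz_g le_gn; rewrite /prob -(card_ord_lt le_gn).
rewrite (eq_bigl (fun v => v \in [set v | g %| coefpoly 'F_3 v])); last first.
  by move=> v; rewrite inE.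
apply: sum_prod_le_of_determined => // v w; rewrite !inE => gv gw vw.
by apply: dvdp_coefpoly_determined gv gw _ => // i le_i; apply: vw; rewrite inE -leqNgt.
Qed.

Lemma prob_sqr_dvdp_le n j : (j.*2 <= n.+1)%N ->
  prob p (fun v : {ffun 'I_n.+1 -> 'I_3} =>
    [exists c : {ffun 'I_j -> 'F_3}, monic_of c ^+ 2 %| coefpoly 'F_3 v])
  <= (3 * q ^+ 2) ^+ j.
Proof.
move=> le_jn.
have size_c2 (c : {ffun 'I_j -> 'F_3}) : (size (monic_of c ^+ 2)).-1 = j.*2.
  by rewrite size_exp size_monic_of muln2.
have prob_c (c : {ffun 'I_j -> 'F_3}) :
    prob p (fun v : {ffun 'I_n.+1 -> 'I_3} => monic_of c ^+ 2 %| coefpoly 'F_3 v)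
    <= q ^+ j.*2.
  rewrite -(size_c2 c) prob_dvdp_le ?size_c2 //.
  by rewrite expf_neq0 // monic_neq0 // monic_of_monic.
rewrite /prob; apply: le_trans (union_bound (B := predT)
  (Q := fun (c : {ffun 'I_j -> 'F_3}) v => monic_of c ^+ 2 %| coefpoly 'F_3 v) _ _) _.
- by move=> v; apply: prodr_ge0.
- by move=> v /existsP[c]; exists c.
apply: (@le_trans _ _ (\sum_(c : {ffun 'I_j -> 'F_3}) q ^+ j.*2)).
  by apply: ler_sum => c _; apply: prob_c.
rewrite sumr_const card_ffun card_Fp // card_ord exprMn -natrX mulr_natl.
by rewrite -exprM mul2n.
Qed.

Lemma prob_event_le n d :
  prob_event p n d <= q ^+ n.+1 + \sum_(j < n.+1 | (d <= j)%N) (3 * q ^+ 2) ^+ j.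
Proof.
have w_ge0 (v : {ffun 'I_n.+1 -> 'I_3}) : 0 <= \prod_(j < n.+1) p (v j).
  by apply: prodr_ge0.
pose SQ (j : 'I_n.+1) (v : {ffun 'I_n.+1 -> 'I_3}) :=
  [exists c : {ffun 'I_j -> 'F_3}, monic_of c ^+ 2 %| coefpoly 'F_3 v].
apply: le_trans (union_bound (B := predT) (Q := fun (b : bool) v =>
    if b then 'X^(n.+1) %| coefpoly 'F_3 v
    else [exists j : 'I_n.+1, [&& (d <= j)%N, (j.*2 <= n)%N & SQ j v]]) w_ge0 _) _.
  by move=> v /asboolP/event_mod3_cover/orP[]; [exists true | exists false].
rewrite big_bool /=; apply: lerD.
  have := @prob_dvdp_le n 'X^(n.+1); rewrite size_polyXn; apply => //.
  by rewrite monic_neq0 ?monicXn.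
apply: le_trans (union_bound (B := fun j : 'I_n.+1 => (d <= j)%N && (j.*2 <= n)%N)
  (Q := SQ) w_ge0 _) _.
  by move=> v /existsP[j /and3P[dj jn sq]]; exists j; rewrite ?dj.
rewrite [leRHS]big_mkcond [leLHS]big_mkcond; apply: ler_sum => j _.
case: ifP => [/andP[-> le_jn] | _]; first exact: prob_sqr_dvdp_le (leqW le_jn).
by case: ifP => _; rewrite ?lexx // exprn_ge0 // mulr_ge0 ?ler0n ?sqr_ge0.
Qed.

End ProbabilityBounds.

Lemma sum_geom_tail_le (R : realFieldType) (s : R) d N : 0 <= s -> s < 1 ->
  \sum_(j < N | (d <= j)%N) s ^+ j <= s ^+ d / (1 - s).
Proof.
move=> s_ge0 s_lt1.
have telescope : (\sum_(j < N | (d <= j)%N) s ^+ j) * (1 - s) = s ^+ d - s ^+ maxn N d.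
  elim: N => [|N IH]; first by rewrite big_ord0 mul0r max0n subrr.
  rewrite big_mkcond big_ord_recr /= -big_mkcond /= mulrDl IH.
  case: (leqP d N) => [le_dN | lt_Nd]; last by rewrite mul0r addr0 (maxn_idPr lt_Nd).
  by rewrite (maxn_idPl (leqW le_dN)) exprS; ring.
by rewrite ler_pdivlMr ?subr_gt0 // telescope lerBlDr lerDl exprn_ge0.
Qed.

Lemma three_sqr_lt1 (R : rcfType) (q : R) : 0 <= q -> q < 1 / Num.sqrt 3 ->
  3 * q ^+ 2 < 1.
Proof.
move=> q_ge0 q_lt; have sqrt3_gt0 : 0 < Num.sqrt 3 :> R by rewrite sqrtr_gt0 ltr0n.
have -> : 3 * q ^+ 2 = (q * Num.sqrt 3) ^+ 2 by rewrite exprMn sqr_sqrtr ?ler0n // mulrC.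
rewrite expr_lt1 //; last exact: mulr_ge0 q_ge0 (ltW sqrt3_gt0).
by rewrite -ltr_pdivlMr.
Qed.

Theorem lemma1p3 (R : realType) (p : 'I_3 -> R) :
  (forall x, 0 <= p x) -> \sum_(x < 3) p x = 1 ->
  (forall x, p x < 1 / Num.sqrt 3) ->
  exists C c : R, [/\ 0 < C, 0 < c &
    forall n d : nat, (1 <= n)%N -> (1 <= d <= n)%N ->
      prob_event p n d <= C * expR (- c * d%:R)].
Proof.
move=> p_ge0 p_sum1 p_lt.
have [xm _ p_le] := @arg_maxP _ _ _ ord0 predT p isT.
set q := p xm; set s := 3 * q ^+ 2.
have p_le_q x : p x <= q := p_le x isT.
have three_q_ge1 : 1 <= 3 * q.
  have -> : 3 * q = \sum_(x < 3) q by rewrite sumr_const card_ord mulr_natl.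
  by rewrite -p_sum1 ler_sum.
have q_gt0 : 0 < q by move: (lt_le_trans ltr01 three_q_ge1); rewrite pmulr_rgt0.
have s_lt1 : s < 1 := three_sqr_lt1 (ltW q_gt0) (p_lt xm).
have q_le_s : q <= s by rewrite /s expr2 mulrA -[leLHS]mul1r ler_wpM2r ?(ltW q_gt0).
have s_gt0 : 0 < s := lt_le_trans q_gt0 q_le_s.
exists (1 + 1 / (1 - s)), (- ln s); split.
- by rewrite addr_gt0 // divr_gt0 // subr_gt0.
- by rewrite oppr_gt0 ln_lt0 // s_gt0 s_lt1.
move=> n d _ /andP[_ le_dn].
rewrite opprK expRM_natr lnK ?posrE // mulrDl mul1r mul1r mulrC.
have q_le1 : q <= 1 by rewrite (le_trans q_le_s) // ltW.
apply: le_trans (prob_event_le p_ge0 p_sum1 p_le_q n d) _; apply: lerD.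
  apply: le_trans (ler_wiXn2l (ltW q_gt0) q_le1 (leqW le_dn)) _.
  by rewrite lerXn2r // nnegrE ltW.
exact: sum_geom_tail_le (ltW s_gt0) s_lt1.
Qed.
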